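(* For the $k$-server problem on the line, for every instance $I$, every prediction, and every $\lambda\in[0,1]$, there is $c>0$ depending only on the initial configuration such that $\mathrm{LambdaDC}(I)\le\alpha(k)\cdot\mathrm{FtP}(I)+c$, where $\alpha(k)=1+2\lambda+\dots+2\lambda^{(k-1)/2}$ if $k$ is odd and $\alpha(k)=1+2\lambda+\dots+2\lambda^{k/2-1}+\lambda^{k/2}$ if $k$ is even.
   Context: The $k$-server problem on the line: servers on $\mathbb{R}$ labeled $s_1\le\dots\le s_k$, requests revealed online and served by moving a server to them; cost = total distance moved. A prediction gives for each request $r_t$ an index $p_t\in\{1,\dots,k\}$; FtP serves each request by server $s_{p_t}$ (relabeling by position), $\mathrm{FtP}(I)$ being its cost. LambdaDC with parameter $\lambda$: if $r_t<s_1$ or $r_t>s_k$, move only the closest server; if $s_i<r_t<s_{i+1}$ and $p_t\le i$, move $s_i$ at speed $1$ and $s_{i+1}$ at speed $\lambda$ towards $r_t$ until one reaches it; if $p_t\ge i+1$, the speeds are swapped. *)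

From HB Require Import structures.
From mathcomp Require Import all_boot all_order all_algebra.
Set Implicit Arguments. Unset Strict Implicit. Unset Printing Implicit Defensive.
Import Order.TTheory GRing.Theory Num.Theory.
Local Open Scope ring_scope.

Section KServer.
Variable R : realFieldType.

(* A configuration is a sequence of server positions.  For LambdaDC it is kept
   sorted (s_1 <= ... <= s_k, stored at indices 0..k-1).  A request is a pair
   (r, p) of a point r and a predicted server index p (0-based: p = p_t - 1). *)

Definition dc_step (lam : R) (c : seq R) (r : R) (p : nat) : seq R * R :=
  let k := size c in
  if r < nth 0 c 0 then (set_nth 0 c 0 r, nth 0 c 0 - r)
  else if nth 0 c k.-1 < r then (set_nth 0 c k.-1 r, r - nth 0 c k.-1)
  else if r \in c then (c, 0)
  else
    (* s_i < r < s_{i+1}, with i the (0-based) index of the last server left of r *)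
    let i := (count (fun x => x < r) c).-1 in
    let a := nth 0 c i in
    let b := nth 0 c i.+1 in
    let d1 := r - a in
    let d2 := b - r in
    if (p <= i)%N then
      (* left server at speed 1, right server at speed lam *)
      if lam * d1 <= d2 then
        (set_nth 0 (set_nth 0 c i r) i.+1 (b - lam * d1), (1 + lam) * d1)
      else
        (set_nth 0 (set_nth 0 c i (a + d2 / lam)) i.+1 r, d2 / lam + d2)
    else
      (* right server at speed 1, left server at speed lam *)
      if lam * d2 <= d1 then
        (set_nth 0 (set_nth 0 c i (a + lam * d2)) i.+1 r, (1 + lam) * d2)
      else
        (set_nth 0 (set_nth 0 c i r) i.+1 (b - d1 / lam), d1 / lam + d1).

Fixpoint dc_cost (lam : R) (c : seq R) (I : seq (R * nat)) : R :=
  match I with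
  | [::] => 0
  | (r, p) :: I' => (dc_step lam c r p).2 + dc_cost lam (dc_step lam c r p).1 I'
  end.

Definition LambdaDC (lam : R) (s0 : seq R) (I : seq (R * nat)) : R :=
  dc_cost lam (sort <=%R s0) I.

Definition ftp_step (c : seq R) (r : R) (p : nat) : seq R * R :=
  let c' := sort <=%R c in
  (sort <=%R (set_nth 0 c' p r), `|nth 0 c' p - r|).

Fixpoint FtP (c : seq R) (I : seq (R * nat)) : R :=
  match I with
  | [::] => 0
  | (r, p) :: I' => (ftp_step c r p).2 + FtP (ftp_step c r p).1 I'
  end.

Definition alpha (lam : R) (k : nat) : R :=
  if odd k then 1 + 2 * \sum_(1 <= j < (k./2).+1) lam ^+ j
  else 1 + 2 * \sum_(1 <= j < k./2) lam ^+ j + lam ^+ (k./2).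

End KServer.

From HB Require Import structures.
From mathcomp Require Import all_boot all_order all_algebra.
From mathcomp Require Import lra zify.
Import Order.TTheory GRing.Theory Num.Theory.
Local Open Scope ring_scope.
Set Implicit Arguments. Unset Strict Implicit.

(* Let x be the sorted configuration of LambdaDC, y that of FtP,
   and Phi(x, y) = alpha(k) M(x, y) + Psi(x), where M is the cost of the sorted, hence
   cheapest, matching of x with y, and Psi is a lambda-weighted spread of x (for
   lambda = 1 the Double Coverage potential \sum_(i < j) (x_j - x_i)).  When FtP moves
   its server p to the request r, its servers can be re-ordered so that r faces the
   LambdaDC server m that will move at speed 1: m lies on the predicted side, so only
   the servers between p and m shift by one place and M grows by at most |y_p - r|.
   Against that matching each LambdaDC step is paid for by the drop of Phi: the fast
   server gains d on r, the slow one moves by lambda d, and with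
   alpha(k) = 1 + \sum_(0 < g < k) lambda ^ min(g, k - g) this covers the change of Psi.
   Summing over the requests, LambdaDC <= alpha(k) FtP + Phi(initial configuration). *)

Ltac split_abs := repeat match goal with |- context [ `|?e| ] =>
  let h := fresh "h" in case: (lerP 0 e) => h;
  [rewrite (ger0_norm h) | rewrite (ltr0_norm h)] end.

Section SortedSeq.
Variable R : realFieldType.
Implicit Types x : seq R.

Lemma sorted_nth_le x i j : sorted <=%R x -> (i <= j)%N -> (j < size x)%N ->
  x`_i <= x`_j.
Proof.
move=> sorted_x le_ij lt_j; apply: (le_sorted_leq_nth 0 sorted_x); rewrite ?inE //.
exact: leq_ltn_trans lt_j.
Qed.

Lemma take_nth_drop x n : (n < size x)%N -> x = take n x ++ x`_n :: drop n.+1 x.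
Proof. by move=> lt_n; rewrite -[LHS](cat_take_drop n) (drop_nth 0 lt_n). Qed.

Lemma size_set_nth_lt x i v : (i < size x)%N -> size (set_nth 0 x i v) = size x.
Proof. by move=> lt_i; rewrite size_set_nth; apply/maxn_idPr. Qed.

Lemma sorted_set_nth x i v : sorted <=%R x -> (i < size x)%N ->
  ((0 < i)%N -> x`_i.-1 <= v) -> ((i.+1 < size x)%N -> v <= x`_i.+1) ->
  sorted <=%R (set_nth 0 x i v).
Proof.
move=> sorted_x lt_i le_l le_r.
apply/(sortedP 0) => j; rewrite size_set_nth_lt // => lt_j.
rewrite (@nth_set_nth _ 0 x i v j) (@nth_set_nth _ 0 x i v j.+1) /=.
have [eq_ji|ne_ji] := eqVneq j i.
  by rewrite eq_ji (gtn_eqF (ltnSn i)); apply: le_r; rewrite -eq_ji.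
have [eq_ji|_] := eqVneq j.+1 i; last exact: (sortedP 0 sorted_x).
by move: le_l; rewrite -eq_ji; apply.
Qed.

Lemma sorted_set_nth2 x i u v : sorted <=%R x -> (i.+1 < size x)%N ->
  x`_i <= u -> u <= v -> v <= x`_i.+1 ->
  sorted <=%R (set_nth 0 (set_nth 0 x i u) i.+1 v).
Proof.
move=> sorted_x lt_i le_u le_uv le_v.
have size_x' : size (set_nth 0 x i u) = size x by rewrite size_set_nth_lt // ltnW.
apply: sorted_set_nth; rewrite ?size_x' //.
- apply: sorted_set_nth => // [|i_gt0 |_]; first lia.
  + by apply: le_trans le_u; apply: sorted_nth_le; lia.
  + exact: le_trans le_uv le_v.
- by move=> _; rewrite (@nth_set_nth _ 0 x i u i) /= eqxx.
- move=> lt_i2; rewrite (@nth_set_nth _ 0 x i u i.+2) /= (gtn_eqF (ltnW (ltnSn _))).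
  by apply: le_trans le_v _; apply: sorted_nth_le.
Qed.

Lemma sorted_nth_lt_count x (r : R) j : sorted <=%R x -> (j < size x)%N ->
  (x`_j < r) = (j < count (fun y : R => (y < r)%R) x)%N.
Proof.
elim: x j => [|a x IH] j //= path_x lt_j.
have a_min := order_path_min le_trans path_x.
case: (ltP a r) => [lt_ar|le_ra] /=.
  by case: j lt_j => [|j] lt_j //=; rewrite IH // (path_sorted path_x).
have -> : count (fun y : R => (y < r)%R) x = 0%N.
  apply/eqP; rewrite -leqn0 leqNgt -has_count; apply/hasP => -[y y_x].
  by rewrite ltNge (le_trans le_ra (allP a_min y y_x)).
case: j lt_j => [|j] lt_j /=; first by rewrite ltNge le_ra.
by rewrite ltNge (le_trans le_ra) // (allP a_min) // mem_nth.
Qed.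

Lemma count_lt_between x (r : R) : sorted <=%R x -> (0 < size x)%N ->
  x`_0 <= r -> r <= x`_(size x).-1 -> r \notin x ->
  let i := (count (fun y : R => (y < r)%R) x).-1 in (i.+1 < size x)%N /\ x`_i < r < x`_i.+1.
Proof.
move=> sorted_x size_gt0 le_r ge_r r_x; set n := count _ x => i.
have ne_r j : (j < size x)%N -> (x`_j == r) = false.
  by move=> lt_j; apply: contraNF r_x => /eqP <-; apply: mem_nth.
have lt_count j : (j < size x)%N -> (x`_j < r) = (j < n)%N.
  exact: sorted_nth_lt_count.
have n_gt0 : (0 < n)%N by rewrite -lt_count // lt_neqAle ne_r.
have lt_n : (n < size x)%N.
  have lt_last : ((size x).-1 < size x)%N by rewrite ltn_predL.
  by have := lt_count _ lt_last; rewrite ltNge ge_r => /esym/negbT; lia.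
have succ_i : i.+1 = n by rewrite prednK.
have lt_ir : x`_i < r by rewrite lt_count /i ?ltn_predL //; lia.
have lt_rn : r < x`_n.
  have := lt_count _ lt_n; rewrite ltnn => /negbT.
  by rewrite -leNgt le_eqVlt eq_sym ne_r.
by rewrite succ_i lt_n lt_ir lt_rn.
Qed.

End SortedSeq.

Section Matching.
Variable R : realFieldType.
Implicit Types x y z w : seq R.

Fixpoint match_cost x y : R :=
  match x, y with a :: x', b :: y' => `|a - b| + match_cost x' y' | _, _ => 0 end.

Lemma match_cost_ge0 x y : 0 <= match_cost x y.
Proof. by elim: x y => [|a x IH] [|b y] //=; rewrite addr_ge0. Qed.

Lemma match_costC x y : match_cost x y = match_cost y x.
Proof. by elim: x y => [|a x IH] [|b y] //=; rewrite distrC IH. Qed.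

Lemma match_cost_cat x1 x2 y1 y2 : size x1 = size y1 ->
  match_cost (x1 ++ x2) (y1 ++ y2) = match_cost x1 y1 + match_cost x2 y2.
Proof.
elim: x1 y1 => [|a x1 IH] [|b y1] //=; first by rewrite add0r.
by case=> /IH ->; rewrite addrA.
Qed.

Lemma match_cost_set_nth x y j v : (j < size x)%N -> size y = size x ->
  match_cost (set_nth 0 x j v) y = match_cost x y + `|v - y`_j| - `|x`_j - y`_j|.
Proof.
elim: x y j => [|a x IH] [|b y] [|j] //= lt_j [eq_sz]; first lra.
by rewrite IH // !addrA.
Qed.

Lemma match_cost_set_nth2 x w i u v : (i.+1 < size x)%N -> size w = size x ->
  match_cost (set_nth 0 (set_nth 0 x i u) i.+1 v) w = match_cost x w +
    (`|u - w`_i| - `|x`_i - w`_i|) + (`|v - w`_i.+1| - `|x`_i.+1 - w`_i.+1|).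
Proof.
move=> lt_i size_w.
have size_x' : size (set_nth 0 x i u) = size x by rewrite size_set_nth_lt // ltnW.
rewrite match_cost_set_nth ?size_x' // match_cost_set_nth //; last exact: ltnW.
by rewrite (@nth_set_nth _ 0 x i u i.+1) /= (gtn_eqF (ltnSn i)) !addrA.
Qed.

Lemma match_cost_triangle x y z : size y = size z ->
  match_cost x z <= match_cost x y + match_cost y z.
Proof.
elim: x y z => [|a x IH] y z eq_sz /=; first by rewrite add0r match_cost_ge0.
case: y z eq_sz => [|b y] [|c z] //=; first by rewrite addr0.
case=> eq_sz.
have := IH _ _ eq_sz; have := ler_distD b a c; lra.
Qed.

Lemma match_cost_behead x : sorted <=%R x -> forall n, (n < size x)%N ->
  match_cost (take n x) (take n (behead x)) = x`_n - x`_0.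
Proof.
elim: x => [|a x IH] //= path_x [|n] lt_n /=; first by rewrite subrr.
case: x path_x IH lt_n => [|b x] //= /andP[le_ab path_x] IH lt_n.
rewrite IH // ler0_norm ?subr_le0 //; lra.
Qed.

Lemma dist_uncross (a a' b b' : R) : a <= a' -> b <= b' ->
  `|a - b| + `|a' - b'| <= `|a - b'| + `|a' - b|.
Proof. move=> le_a le_b; split_abs; lra. Qed.

Lemma match_cost_sorted_min x y w : sorted <=%R x -> sorted <=%R y ->
  perm_eq w y -> size x = size y -> match_cost x y <= match_cost x w.
Proof.
elim: x y w => [|a x IH] [|b y] w //= path_x path_y perm_w [eq_sz].
case: w perm_w (perm_size perm_w) => [|c w] //= perm_w [eq_sz_w].
rewrite -eq_sz in eq_sz_w.
have sorted_x := path_sorted path_x; have sorted_y := path_sorted path_y.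
have [eq_cb|ne_cb] := eqVneq c b.
  by move: perm_w; rewrite eq_cb perm_cons lerD2l => /IH; apply.
have b_w : b \in w.
  by move: (perm_mem perm_w b); rewrite !inE eqxx eq_sym (negbTE ne_cb) /= => ->.
set n := index b w.
have lt_n : (n < size w)%N by rewrite index_mem.
have lt_nx : (n < size x)%N by rewrite -eq_sz_w.
have w_n : w`_n = b by rewrite nth_index.
have perm_w' : perm_eq (set_nth 0 w n c) y.
  rewrite -(perm_cons b); apply: perm_trans perm_w.
  rewrite set_nthE lt_n -[in X in perm_eq _ (c :: X)](cat_take_drop n w).
  rewrite (drop_nth 0 lt_n) w_n.
  by apply/permP => e /=; rewrite !count_cat /=; lia.
have le_a : a <= x`_n.
  exact: (allP (order_path_min le_trans path_x)) (mem_nth 0 lt_nx).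
have le_b : b <= c.
  have : c \in b :: y by rewrite -(perm_mem perm_w) mem_head.
  rewrite inE => /predU1P[-> //|c_y].
  exact: (allP (order_path_min le_trans path_y)).
have := IH _ _ sorted_x sorted_y perm_w' eq_sz.
rewrite [match_cost x (set_nth _ _ _ _)]match_costC match_cost_set_nth //.
rewrite [match_cost w x]match_costC w_n (distrC c) (distrC b).
have := dist_uncross le_a le_b; lra.
Qed.

Lemma match_cost_shift_left x y m (r : R) : sorted <=%R y -> size x = size y ->
  (m < size y)%N -> ((0 < m)%N -> x`_m <= r) ->
  match_cost x (take m (behead y) ++ r :: drop m.+1 y) <= match_cost x y + `|y`_0 - r|.
Proof.
move=> sorted_y eq_sz lt_m le_r.
have lt_mx : (m < size x)%N by rewrite eq_sz.
have sz_take (s : seq R) : (m <= size s)%N -> size (take m s) = m by apply: size_takel.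
rewrite {1 2}(take_nth_drop lt_mx) [in X in _ <= match_cost _ X + _](take_nth_drop lt_m).
rewrite !match_cost_cat /= ?sz_take ?size_behead; try lia.
have sz_eq : size (take m y) = size (take m (behead y)).
  by rewrite !sz_take ?size_behead; lia.
have := match_cost_triangle (take m x) sz_eq; rewrite match_cost_behead //.
have : y`_m - y`_0 + `|x`_m - r| - `|x`_m - y`_m| <= `|y`_0 - r|.
  have [->|/le_r le_xr] := posnP m.
    by rewrite subrr; have := ler_distD y`_0 x`_0 r; rewrite (distrC y`_0); lra.
  have := sorted_nth_le sorted_y (leq0n m) lt_m.
  split_abs; lra.
lra.
Qed.

Lemma match_cost_shift_right x y p (r : R) : sorted <=%R y -> size x = size y ->
  (p < size y)%N -> ((0 < p)%N -> r <= x`_0) ->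
  match_cost x (r :: take p y ++ drop p.+1 y) <= match_cost x y + `|y`_p - r|.
Proof.
case: x y => [|a x] [|b y] // sorted_y [eq_sz] lt_p le_r /=.
have lt_px : (p <= size x)%N by rewrite eq_sz.
have sz_take (s : seq R) : (p <= size s)%N -> size (take p s) = p by apply: size_takel.
have sz_eq : size (take p y) = size (take p (b :: y)) by rewrite !sz_take //= -?eq_sz; lia.
rewrite -{1 2}(cat_take_drop p x) -[in match_cost _ y](cat_take_drop p y).
rewrite !match_cost_cat ?sz_take ?eq_sz //=; try lia.
have := match_cost_triangle (take p x) sz_eq.
rewrite [match_cost (take p y) _]match_costC (match_cost_behead sorted_y lt_p) /=.
have : (b :: y)`_p - b + `|a - r| - `|a - b| <= `|(b :: y)`_p - r|.
  have [->|/le_r /= le_ra] := posnP p.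
    by rewrite subrr; have := ler_distD b a r; rewrite (distrC b); lra.
  have := sorted_nth_le sorted_y (leq0n p) lt_p.
  split_abs; lra.
lra.
Qed.

Definition reassignable x p m (r : R) :=
  ((p <= m)%N && (x`_m <= r)) || ((m <= p)%N && (r <= x`_m)).

Lemma match_cost_reassign x y p m (r : R) : sorted <=%R y -> size x = size y ->
  (p < size y)%N -> (m < size y)%N -> reassignable x p m r ->
  exists w, [/\ perm_eq w (set_nth 0 y p r), w`_m = r &
    match_cost x w <= match_cost x y + `|y`_p - r|].
Proof.
elim: p m x y => [|p IH] m x y sorted_y eq_sz lt_p lt_m shape.
  exists (take m (behead y) ++ r :: drop m.+1 y); split.
  - case: y {sorted_y eq_sz lt_p shape} lt_m => [|b y] //= lt_m.
    by rewrite -cat1s perm_catCA cat_take_drop.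
  - have sz_take : size (take m (behead y)) = m by rewrite size_takel // size_behead; lia.
    by rewrite nth_cat sz_take ltnn subnn.
  - apply: match_cost_shift_left => // m_gt0.
    by move: shape; rewrite /reassignable leqn0 (gtn_eqF m_gt0) /= orbF.
case: m lt_m shape => [|m] lt_m shape.
  exists (r :: take p.+1 y ++ drop p.+2 y); split => //.
  - by rewrite set_nthE lt_p perm_sym -cat1s perm_catCA.
  - by apply: match_cost_shift_right => // _; move: shape; rewrite /reassignable /= orFb.
case: x y sorted_y eq_sz lt_p lt_m shape => [|a x] [|b y] //=.
move=> /path_sorted sorted_y [eq_sz] lt_p lt_m shape.
have [w [perm_w w_m le_w]] := IH m x y sorted_y eq_sz lt_p lt_m shape.
by exists (b :: w); split; rewrite /= ?perm_cons //; lra.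
Qed.

End Matching.

Section Potential.
Variables (R : realFieldType) (lam : R) (k : nat).
Hypotheses (lam_ge0 : 0 <= lam) (lam_le1 : lam <= 1) (k_gt0 : (0 < k)%N).

Local Notation alphak := (alpha lam k).

Definition gap_weight m := lam ^+ minn m (k - m).
Definition gap_sum n := \sum_(i < n) gap_weight i.+1.
Definition spread_coef j := gap_sum j - gap_sum (k.-1 - j).

(* By Abel summation, [spread x] is the sum over 0 < g < k of
   [gap_weight g * (x_g + ... + x_(k-1) - x_0 - ... - x_(k-1-g))]; for
   [lam = 1] it is the Double Coverage potential [\sum_(i < j) (x_j - x_i)]. *)
Definition spread (x : seq R) := \sum_(j < k) spread_coef j * x`_j.

Lemma gap_sum0 : gap_sum 0 = 0.
Proof. by rewrite /gap_sum big_ord0. Qed.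

Lemma gap_sumS n : gap_sum n.+1 = gap_sum n + gap_weight n.+1.
Proof. by rewrite /gap_sum big_ord_recr. Qed.

Lemma gap_weight_ge0 m : 0 <= gap_weight m.
Proof. exact: exprn_ge0. Qed.

Lemma gap_weight_ge m j : (minn m (k - m) <= j)%N -> lam ^+ j <= gap_weight m.
Proof. by move=> le_j; apply: ler_wiXn2l. Qed.

Lemma gap_sum_le a b : (a <= b)%N -> gap_sum a <= gap_sum b.
Proof.
move=> /subnK <-; elim: (b - a)%N => [|n IH]; first by rewrite add0n.
by rewrite addSn gap_sumS; have := gap_weight_ge0 (n + a).+1; lra.
Qed.

Lemma gap_sum_split i : (i <= k.-1)%N -> gap_sum k.-1 = gap_sum i + gap_sum (k.-1 - i).
Proof.
elim: i => [|i IH] le_i; first by rewrite gap_sum0 add0r subn0.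
rewrite IH; last by lia.
have -> : (k.-1 - i = (k.-1 - i.+1).+1)%N by lia.
rewrite !gap_sumS /gap_weight.
have -> : minn (k.-1 - i.+1).+1 (k - (k.-1 - i.+1).+1) = minn i.+1 (k - i.+1) by lia.
by rewrite addrAC addrA.
Qed.

Lemma gap_sum_lower_bound n : lam - lam ^+ n.+1 <= (1 - lam) * gap_sum n.
Proof.
elim: n => [|n IH]; first by rewrite gap_sum0 mulr0 expr1 subrr.
have lam1_ge0 : 0 <= 1 - lam by rewrite subr_ge0.
have := ler_wpM2l lam1_ge0 (gap_weight_ge (geq_minl n.+1 (k - n.+1))).
rewrite gap_sumS mulrDr [lam ^+ n.+2]exprS; lra.
Qed.

Lemma gap_sum_small n : (n + n <= k)%N -> gap_sum n = \sum_(1 <= j < n.+1) lam ^+ j.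
Proof.
move=> le_n; rewrite big_add1 big_mkord; apply: eq_bigr => i _.
by rewrite /gap_weight (_ : minn i.+1 (k - i.+1) = i.+1) //; have := ltn_ord i; lia.
Qed.

Lemma alphaE : alphak = 1 + gap_sum k.-1.
Proof.
rewrite /alpha; have := odd_double_half k; set n := k./2.
case: (boolP (odd k)) => [odd_k /= k_eq|even_k /= k_eq].
  rewrite (gap_sum_split (i := n)); last by lia.
  rewrite (_ : (k.-1 - n = n)%N); last by lia.
  rewrite gap_sum_small; [lra | lia].
rewrite (gap_sum_split (i := n)); last by lia.
have n_gt0 : (0 < n)%N by lia.
rewrite (_ : (k.-1 - n = n.-1)%N); last by lia.
have -> : gap_sum n = gap_sum n.-1 + lam ^+ n.
  rewrite -[in LHS](prednK n_gt0) gap_sumS prednK // /gap_weight.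
  by rewrite (_ : minn n (k - n) = n) //; lia.
rewrite gap_sum_small ?prednK //; [lra | lia].
Qed.

Lemma alpha_ge0 : 0 <= alphak.
Proof. by rewrite alphaE; have := gap_sum_le (leq0n k.-1); rewrite gap_sum0; lra. Qed.

Lemma spread_coef_rev j : (j <= k.-1)%N -> spread_coef (k.-1 - j) = - spread_coef j.
Proof. by move=> le_j; rewrite /spread_coef subKn // opprB. Qed.

Lemma spread_coef0 : spread_coef 0 = 1 - alphak.
Proof. rewrite alphaE /spread_coef gap_sum0 subn0; lra. Qed.

Lemma spread_coef_last : spread_coef k.-1 = alphak - 1.
Proof. rewrite alphaE /spread_coef subnn gap_sum0; lra. Qed.

Lemma spread_coef_pair_left i : (i.+1 < k)%N ->
  (1 + lam) + spread_coef i - lam * spread_coef i.+1 <= alphak * (1 - lam).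
Proof.
move=> lt_i; rewrite alphaE (gap_sum_split (i := i)) /spread_coef; last by lia.
set j := (k.-1 - i)%N; have j_gt0 : (0 < j)%N by lia.
have -> : (k.-1 - i.+1 = j.-1)%N by lia.
have -> : gap_sum j = gap_sum j.-1 + gap_weight j.
  by rewrite -[in LHS](prednK j_gt0) gap_sumS prednK.
have := gap_sum_lower_bound j.-1; rewrite prednK // => lb_sum.
have lb_j : lam ^+ j <= gap_weight j by apply/gap_weight_ge/geq_minl.
have lb_i : lam ^+ j <= gap_weight i.+1 by apply: gap_weight_ge; lia.
have : 0 <= lam * (gap_weight i.+1 - lam ^+ j) by rewrite mulr_ge0 ?subr_ge0.
have : 0 <= (2 - lam) * (gap_weight j - lam ^+ j).
  by apply: mulr_ge0; [move: lam_le1; lra | rewrite subr_ge0].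
rewrite gap_sumS; lra.
Qed.

Lemma spread_coef_pair_right i : (i.+1 < k)%N ->
  (1 + lam) - spread_coef i.+1 + lam * spread_coef i <= alphak * (1 - lam).
Proof.
move=> lt_i; have /spread_coef_pair_left : ((k.-1 - i.+1).+1 < k)%N by lia.
rewrite (_ : (k.-1 - i.+1).+1 = k.-1 - i)%N; last by lia.
rewrite (spread_coef_rev (j := i.+1)) ?(spread_coef_rev (j := i)); try lia.
lra.
Qed.

Lemma spread_set_nth (x : seq R) i (v : R) : (i < k)%N ->
  spread (set_nth 0 x i v) = spread x + spread_coef i * (v - x`_i).
Proof.
move=> lt_i; rewrite /spread (bigD1 (Ordinal lt_i)) // [in RHS](bigD1 (Ordinal lt_i)) //=.
rewrite (@nth_set_nth _ 0 x i v i) /= eqxx.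
rewrite (eq_bigr (fun j : 'I_k => spread_coef j * x`_j)) => [|j ne_j]; first lra.
by rewrite (@nth_set_nth _ 0 x i v j) /= ifN.
Qed.

Lemma spread_set_nth2 (x : seq R) i (u v : R) : (i.+1 < k)%N ->
  spread (set_nth 0 (set_nth 0 x i u) i.+1 v) =
  spread x + spread_coef i * (u - x`_i) + spread_coef i.+1 * (v - x`_i.+1).
Proof.
move=> lt_i; rewrite !spread_set_nth //; last exact: ltnW.
by rewrite (@nth_set_nth _ 0 x i u i.+1) /= (gtn_eqF (ltnSn i)).
Qed.

Lemma spread_ge0 (x : seq R) : sorted <=%R x -> size x = k -> 0 <= spread x.
Proof.
move=> sorted_x size_x.
have spread_rev : spread x = - \sum_(j < k) spread_coef j * x`_(k.-1 - j).
  rewrite /spread (reindex_inj rev_ord_inj) /= -sumrN; apply: eq_bigr => j _.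
  have lt_j := ltn_ord j.
  rewrite (_ : (k - j.+1 = k.-1 - j)%N); last by lia.
  by rewrite spread_coef_rev ?mulNr ?opprK //; lia.
suff : 0 <= spread x + spread x by lra.
rewrite {1}spread_rev addrC -sumrB sumr_ge0 // => j _; rewrite -mulrBr.
have lt_j := ltn_ord j.
have [le_j|lt_j'] := leqP j (k.-1 - j).
- apply: mulr_le0; rewrite subr_le0 ?gap_sum_le //.
  by apply: sorted_nth_le; rewrite ?size_x //; lia.
- apply: mulr_ge0; rewrite subr_ge0; first by apply: gap_sum_le; lia.
  by apply: sorted_nth_le; rewrite ?size_x //; lia.
Qed.

Definition potential (x y : seq R) := alphak * match_cost x (sort <=%R y) + spread x.

Definition amortized (x x' : seq R) (cost : R) m (r : R) := forall w, size w = k -> w`_m = r ->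
  cost + alphak * match_cost x' w + spread x' <= alphak * match_cost x w + spread x.

Lemma potential_ge0 (x y : seq R) : sorted <=%R x -> size x = k -> 0 <= potential x y.
Proof.
move=> sorted_x size_x.
by rewrite /potential addr_ge0 ?spread_ge0 // mulr_ge0 ?alpha_ge0 ?match_cost_ge0.
Qed.

Lemma potential_sort (x y : seq R) : potential x (sort <=%R y) = potential x y.
Proof. by rewrite /potential (sorted_sort le_trans) // (sort_sorted le_total). Qed.

Lemma amortized_potential (x x' y : seq R) p m (r cost : R) :
  sorted <=%R x' -> size x = k -> size x' = k -> sorted <=%R y -> size y = k ->
  (p < k)%N -> (m < k)%N -> reassignable x p m r -> amortized x x' cost m r ->
  cost + potential x' (set_nth 0 y p r) <= alphak * `|y`_p - r| + potential x y.
Proof.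
move=> sorted_x' size_x size_x' sorted_y size_y lt_p lt_m reass amort.
have [|||w [perm_w w_m le_w]] := match_cost_reassign sorted_y _ _ _ reass; rewrite ?size_y //.
have size_z : size (set_nth 0 y p r) = k by rewrite size_set_nth_lt size_y.
have size_w : size w = k by rewrite (perm_size perm_w).
have le_sort : match_cost x' (sort <=%R (set_nth 0 y p r)) <= match_cost x' w.
  apply: match_cost_sorted_min => //; first exact: (sort_sorted le_total).
  - by rewrite perm_sym perm_sort perm_sym.
  - by rewrite size_sort size_z.
have := amort w size_w w_m.
have := ler_wpM2l alpha_ge0 le_sort; have := ler_wpM2l alpha_ge0 le_w.
rewrite /potential (sorted_sort le_trans sorted_y); lra.
Qed.

Lemma amortized_refl (x : seq R) m (r : R) : amortized x x 0 m r.
Proof. by move=> w _ _; rewrite add0r. Qed.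

Lemma amortized_end (x : seq R) j (r : R) : size x = k -> (j < k)%N ->
  spread_coef j * (r - x`_j) <= (alphak - 1) * `|x`_j - r| ->
  amortized x (set_nth 0 x j r) `|x`_j - r| j r.
Proof.
move=> size_x lt_j coef_j w size_w w_j.
rewrite match_cost_set_nth ?size_x ?size_w // spread_set_nth // w_j subrr normr0.
lra.
Qed.

Lemma amortized_pair_left (x : seq R) i (u v r d cost : R) : size x = k -> (i.+1 < k)%N ->
  x`_i <= u -> u <= r -> v <= x`_i.+1 ->
  u - x`_i = d -> x`_i.+1 - v = lam * d -> cost = (1 + lam) * d ->
  amortized x (set_nth 0 (set_nth 0 x i u) i.+1 v) cost i r.
Proof.
move=> size_x lt_i le_u le_ur le_v eq_d eq_lamd -> w size_w w_i.
have d_ge0 : 0 <= d by rewrite -eq_d subr_ge0.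
rewrite match_cost_set_nth2 ?size_x ?size_w // spread_set_nth2 // w_i eq_d.
have -> : v - x`_i.+1 = - (lam * d) by rewrite -eq_lamd opprB.
have -> : `|u - r| - `|x`_i - r| = - d by rewrite -eq_d; split_abs; lra.
have : `|v - w`_i.+1| - `|x`_i.+1 - w`_i.+1| <= lam * d.
  by rewrite -eq_lamd; split_abs; lra.
move/(ler_wpM2l alpha_ge0); have := ler_wpM2l d_ge0 (spread_coef_pair_left lt_i).
lra.
Qed.

Lemma amortized_pair_right (x : seq R) i (u v r d cost : R) : size x = k -> (i.+1 < k)%N ->
  x`_i <= u -> r <= v -> v <= x`_i.+1 ->
  x`_i.+1 - v = d -> u - x`_i = lam * d -> cost = (1 + lam) * d ->
  amortized x (set_nth 0 (set_nth 0 x i u) i.+1 v) cost i.+1 r.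
Proof.
move=> size_x lt_i le_u le_rv le_v eq_d eq_lamd -> w size_w w_i.
have d_ge0 : 0 <= d by rewrite -eq_d subr_ge0.
rewrite match_cost_set_nth2 ?size_x ?size_w // spread_set_nth2 // w_i eq_lamd.
have -> : v - x`_i.+1 = - d by rewrite -eq_d opprB.
have -> : `|v - r| - `|x`_i.+1 - r| = - d by rewrite -eq_d; split_abs; lra.
have : `|u - w`_i| - `|x`_i - w`_i| <= lam * d.
  by rewrite -eq_lamd; split_abs; lra.
move/(ler_wpM2l alpha_ge0); have := ler_wpM2l d_ge0 (spread_coef_pair_right lt_i).
lra.
Qed.

Definition amortizable (x : seq R) p (r : R) (step : seq R * R) :=
  [/\ sorted <=%R step.1, size step.1 = k &
    exists m, [/\ (m < k)%N, reassignable x p m r & amortized x step.1 step.2 m r]].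

Lemma amortizable_first (x : seq R) p (r : R) : sorted <=%R x -> size x = k ->
  r < x`_0 -> amortizable x p r (set_nth 0 x 0 r, x`_0 - r).
Proof.
move=> sorted_x size_x lt_r; split => /=.
- apply: sorted_set_nth => //; first by rewrite size_x.
  by move=> lt_1; apply: le_trans (ltW lt_r) _; apply: sorted_nth_le.
- by rewrite size_set_nth_lt size_x.
exists 0%N; split => //.
  by rewrite /reassignable leq0n (ltW lt_r) orbT.
rewrite -[x`_0 - r]gtr0_norm ?subr_gt0 //; apply: amortized_end => //.
rewrite spread_coef0 gtr0_norm ?subr_gt0 //; lra.
Qed.

Lemma amortizable_last (x : seq R) p (r : R) : sorted <=%R x -> size x = k ->
  (p < k)%N -> x`_k.-1 < r -> amortizable x p r (set_nth 0 x k.-1 r, r - x`_k.-1).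
Proof.
move=> sorted_x size_x lt_p lt_r; have lt_k : (k.-1 < k)%N by rewrite ltn_predL.
split => /=.
- apply: sorted_set_nth => //; rewrite ?size_x ?prednK ?ltnn // => k_gt1.
  by apply: le_trans (ltW lt_r); apply: sorted_nth_le; rewrite ?size_x //; lia.
- by rewrite size_set_nth_lt size_x.
exists k.-1; split => //.
  by rewrite /reassignable -ltnS prednK // lt_p (ltW lt_r).
rewrite -[r - _]opprB -ltr0_norm ?subr_lt0 //; apply: amortized_end => //.
rewrite spread_coef_last ltr0_norm ?subr_lt0 //; lra.
Qed.

Lemma amortizable_mem (x : seq R) p (r : R) : sorted <=%R x -> size x = k ->
  (p < k)%N -> amortizable x p r (x, 0).
Proof.
move=> sorted_x size_x lt_p; split => //; exists p; split => //.
  by rewrite /reassignable leqnn le_total.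
exact: amortized_refl.
Qed.

Lemma lam_div_lt (d e : R) : 0 <= e -> e < lam * d ->
  [/\ 0 <= e / lam, e / lam < d & lam * (e / lam) = e].
Proof.
move=> e_ge0 lt_e.
have lam_gt0 : 0 < lam.
  rewrite lt_neqAle lam_ge0 andbT; apply: contraTneq lt_e => <-.
  by rewrite mul0r -leNgt.
have lam_div : lam * (e / lam) = e by rewrite mulrC divfK ?gt_eqF.
split; [exact: divr_ge0 (ltW lam_gt0) | | exact: lam_div].
by rewrite -(ltr_pM2l lam_gt0) lam_div.
Qed.

Lemma amortizable_pair_left (x : seq R) p (r : R) i : sorted <=%R x -> size x = k ->
  (i.+1 < k)%N -> x`_i < r < x`_i.+1 -> (p <= i)%N ->
  amortizable x p r
    (if lam * (r - x`_i) <= x`_i.+1 - r then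
       (set_nth 0 (set_nth 0 x i r) i.+1 (x`_i.+1 - lam * (r - x`_i)), (1 + lam) * (r - x`_i))
     else
       (set_nth 0 (set_nth 0 x i (x`_i + (x`_i.+1 - r) / lam)) i.+1 r,
        (x`_i.+1 - r) / lam + (x`_i.+1 - r))).
Proof.
move=> sorted_x size_x lt_i /andP[lt_ir lt_ri] le_pi.
set a := x`_i in lt_ir *; set b := x`_i.+1 in lt_ri *.
suff pair_move (u v d : R) : a <= u -> u <= r -> u <= v -> v <= b ->
    u - a = d -> b - v = lam * d ->
    amortizable x p r (set_nth 0 (set_nth 0 x i u) i.+1 v, (1 + lam) * d).
  case: ifP => [le_lam|/negbT]; last rewrite -ltNge => lt_lam.
    have move_ge0 : 0 <= lam * (r - a) by rewrite mulr_ge0 // subr_ge0 ltW.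
    by apply: pair_move; lra.
  have move_ge0 : 0 <= b - r by rewrite subr_ge0 ltW.
  have [div_ge0 div_lt lam_div] := lam_div_lt move_ge0 lt_lam.
  rewrite (_ : (b - r) / lam + (b - r) = (1 + lam) * ((b - r) / lam)).
    by apply: pair_move; lra.
  by rewrite [RHS]mulrDl mul1r lam_div.
move=> le_u le_ur le_uv le_v eq_d eq_lamd; split => /=.
- by apply: sorted_set_nth2; rewrite ?size_x.
- by rewrite !size_set_nth_lt ?size_x // ltnW.
exists i; split; first by apply: ltnW.
  by rewrite /reassignable le_pi (ltW lt_ir).
by apply: amortized_pair_left eq_d eq_lamd _.
Qed.

Lemma amortizable_pair_right (x : seq R) p (r : R) i : sorted <=%R x -> size x = k ->
  (i.+1 < k)%N -> x`_i < r < x`_i.+1 -> (i < p)%N ->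
  amortizable x p r
    (if lam * (x`_i.+1 - r) <= r - x`_i then
       (set_nth 0 (set_nth 0 x i (x`_i + lam * (x`_i.+1 - r))) i.+1 r,
        (1 + lam) * (x`_i.+1 - r))
     else
       (set_nth 0 (set_nth 0 x i r) i.+1 (x`_i.+1 - (r - x`_i) / lam),
        (r - x`_i) / lam + (r - x`_i))).
Proof.
move=> sorted_x size_x lt_i /andP[lt_ir lt_ri] lt_ip.
set a := x`_i in lt_ir *; set b := x`_i.+1 in lt_ri *.
suff pair_move (u v d : R) : a <= u -> r <= v -> u <= v -> v <= b ->
    b - v = d -> u - a = lam * d ->
    amortizable x p r (set_nth 0 (set_nth 0 x i u) i.+1 v, (1 + lam) * d).
  case: ifP => [le_lam|/negbT]; last rewrite -ltNge => lt_lam.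
    have move_ge0 : 0 <= lam * (b - r) by rewrite mulr_ge0 // subr_ge0 ltW.
    by apply: pair_move; lra.
  have move_ge0 : 0 <= r - a by rewrite subr_ge0 ltW.
  have [div_ge0 div_lt lam_div] := lam_div_lt move_ge0 lt_lam.
  rewrite (_ : (r - a) / lam + (r - a) = (1 + lam) * ((r - a) / lam)).
    by apply: pair_move; lra.
  by rewrite [RHS]mulrDl mul1r lam_div.
move=> le_u le_rv le_uv le_v eq_d eq_lamd; split => /=.
- by apply: sorted_set_nth2; rewrite ?size_x.
- by rewrite !size_set_nth_lt ?size_x // ltnW.
exists i.+1; split => //.
  by rewrite /reassignable lt_ip (ltW lt_ri) orbT.
by apply: amortized_pair_right eq_d eq_lamd _.
Qed.

Lemma dc_step_amortizable (x : seq R) p (r : R) : sorted <=%R x -> size x = k ->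
  (p < k)%N -> amortizable x p r (dc_step lam x r p).
Proof.
move=> sorted_x size_x lt_p; rewrite /dc_step size_x.
case: ifP => [|/negbT]; first exact: amortizable_first.
rewrite -leNgt => le_r.
case: ifP => [|/negbT]; first exact: amortizable_last.
rewrite -leNgt => ge_r.
case: ifP => [_|/negbT r_x]; first exact: amortizable_mem.
have [] := count_lt_between sorted_x _ le_r _ r_x; rewrite ?size_x // => lt_i between.
case: ifP => [le_pi|/negbT]; first exact: amortizable_pair_left.
by rewrite -ltnNge; apply: amortizable_pair_right.
Qed.

Lemma dc_cost_le (x y : seq R) I : sorted <=%R x -> size x = k -> size y = k ->
  all (fun q => (q.2 < k)%N) I -> dc_cost lam x I <= alphak * FtP y I + potential x y.
Proof.
elim: I x y => [|[r p] I IH] x y sorted_x size_x size_y /=.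
  by rewrite mulr0 add0r => _; apply: potential_ge0.
move=> /andP[lt_p all_I].
have [sorted_x' size_x' [m [lt_m reass amort]]] := dc_step_amortizable r sorted_x size_x lt_p.
set z := set_nth 0 (sort <=%R y) p r.
have size_z : size (sort <=%R z) = k.
  by rewrite size_sort size_set_nth_lt size_sort size_y.
have := amortized_potential sorted_x' size_x size_x' (sort_sorted le_total y) _
  lt_p lt_m reass amort.
rewrite size_sort potential_sort -(potential_sort _ z) => /(_ size_y).
have := IH _ _ sorted_x' size_x' size_z all_I.
rewrite /ftp_step /=; lra.
Qed.

End Potential.

Unset Implicit Arguments.

Theorem lemma8 (R : realFieldType) (k : nat) (lam : R) (s0 : seq R) :
  (0 < k)%N -> size s0 = k -> 0 <= lam <= 1 ->
  exists c : R, 0 < c /\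
    forall I : seq (R * nat), all (fun q => (q.2 < k)%N) I ->
      LambdaDC lam s0 I <= alpha lam k * FtP s0 I + c.
Proof.
move=> k_gt0 size_s0 /andP[lam_ge0 lam_le1].
have sorted_x0 : sorted <=%R (sort <=%R s0) := sort_sorted le_total s0.
have size_x0 : size (sort <=%R s0) = k by rewrite size_sort.
have pot_ge0 := potential_ge0 lam_ge0 lam_le1 k_gt0 s0 sorted_x0 size_x0.
exists (potential lam k (sort <=%R s0) s0 + 1); split => [|I all_I]; first lra.
have := dc_cost_le lam_ge0 lam_le1 k_gt0 sorted_x0 size_x0 size_s0 all_I.
rewrite /LambdaDC; lra.
Qed.
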